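(* Let $n\geq 2$ and fix indices $1\leq k\neq l\leq n$. Then $\mathrm{Aut}(W_n)$ is generated by the set $Y=\{\sigma_{kl}\}\cup\{\alpha_{(i,i+1)}\mid i=1,\dots,n-1\}$.
   Context: $W_n=\langle s_1,\dots,s_n\mid s_1^2,\dots,s_n^2\rangle$. For $1\leq i\neq j\leq n$ the partial conjugation $\sigma_{ij}\in\mathrm{Aut}(W_n)$ is defined by $\sigma_{ij}(s_j)=s_is_js_i$ and $\sigma_{ij}(s_k)=s_k$ for $k\neq j$. For $\pi\in\mathrm{Sym}(n)$, the permutation automorphism $\alpha_\pi$ is defined by $\alpha_\pi(s_k)=s_{\pi(k)}$; $(i,i+1)$ denotes a transposition. *)

(* The right-angled Coxeter group W_n = <s_1..s_n | s_i^2>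
   (free product of n copies of Z/2) is modelled by its normal forms:
   words over 'I_n with no two adjacent equal letters (0-based indices). *)
From mathcomp Require Import all_boot all_fingroup.
Set Implicit Arguments. Unset Strict Implicit. Unset Printing Implicit Defensive.

Definition nadj n : rel 'I_n := fun a b => a != b.

Definition push n (x : 'I_n) (w : seq 'I_n) : seq 'I_n :=
  match w with
  | y :: w' => if y == x then w' else x :: w
  | [::] => [:: x]
  end.

Lemma push_reduced n (x : 'I_n) w : sorted (@nadj n) w -> sorted (@nadj n) (push x w).
Proof.
case: w => [|y w] //= H; case: eqP => [_|Hyx].
- by case: w H => //= z w /andP[].
- rewrite /= H andbT /nadj; apply/eqP => E; apply: Hyx; by rewrite E.
Qed.

Definition reduce n (s : seq 'I_n) : seq 'I_n := foldr (@push n) [::] s.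

Lemma reduce_reduced n (s : seq 'I_n) : sorted (@nadj n) (reduce s).
Proof. by elim: s => //= x s IH; apply: push_reduced. Qed.

Record W n := MkW { wval : seq 'I_n; wvalP : sorted (@nadj n) wval }.

Definition mulW n (u v : W n) : W n := MkW (reduce_reduced (wval u ++ wval v)).
Definition oneW n : W n := @MkW n [::] isT.
Definition sW n (i : 'I_n) : W n := @MkW n [:: i] isT.

Definition extW n (f : 'I_n -> W n) (w : W n) : W n :=
  foldr (fun i acc => mulW (f i) acc) (oneW n) (wval w).

Definition is_hom n (phi : W n -> W n) : Prop :=
  forall u v, phi (mulW u v) = mulW (phi u) (phi v).

Definition is_aut n (phi : W n -> W n) : Prop := is_hom phi /\ bijective phi.

Definition sigma n (i j : 'I_n) : W n -> W n :=
  extW (fun k => if k == j then mulW (sW i) (mulW (sW j) (sW i)) else sW k).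

Definition alpha n (p : {perm 'I_n}) : W n -> W n :=
  extW (fun k => sW (p k)).

Inductive genW n (Y : (W n -> W n) -> Prop) : (W n -> W n) -> Prop :=
| gen_id : genW Y id
| gen_mul y f : Y y -> genW Y f -> genW Y (y \o f)
| gen_inv y yi f : Y y -> cancel y yi -> cancel yi y -> genW Y f ->
                   genW Y (yi \o f).

Definition Yset n (k l : 'I_n) (f : W n -> W n) : Prop :=
  f = sigma k l \/
  exists i j : 'I_n, nat_of_ord j = i.+1 /\ f = alpha (tperm i j).

(* Peak reduction.  Every automorphism phi sends each generator s_i to an
   involution, i.e. to a reduced palindrome w a rev(w).  If the "halves" w a of
   the images of two generators s_i, s_j are comparable in the prefix order,
   then phi o sigma_ij shortens the image of s_j, so the total length of the
   images decreases.  If no two halves are comparable, a ping-pong argument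
   shows that the image of a reduced word x u begins with the half of the image
   of x; as phi is onto, every letter is then the image of a generator, and phi
   is a permutation automorphism.  Permutations are products of adjacent
   transpositions, and every sigma_ij is conjugate to sigma_kl by a
   permutation automorphism. *)
From mathcomp Require Import all_boot all_fingroup zify.
From Stdlib Require Import Classical.
Set Implicit Arguments. Unset Strict Implicit. Unset Printing Implicit Defensive.

Section NormalForms.
Variable n : nat.
Local Notation T := 'I_n.
Local Notation reduced := (sorted (@nadj n)).

Definition pushs (u x : seq T) := foldr (@push n) x u.

Lemma pushs_cat u v x : pushs (u ++ v) x = pushs u (pushs v x).
Proof. by rewrite /pushs foldr_cat. Qed.

Lemma pushs_reduced u x : reduced x -> reduced (pushs u x).
Proof. by elim: u => //= a u IH Hx; apply: push_reduced; apply: IH. Qed.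

Lemma pushK (a : T) x : reduced x -> push a (push a x) = x.
Proof.
case: x => [|y x] /=; first by rewrite eqxx.
case: (eqVneq y a) => [->|Hya] Hx /=; last by rewrite eqxx.
case: x Hx => [|z x] //= /andP[Haz _].
by rewrite eq_sym (negbTE Haz).
Qed.

Lemma push_fresh (a : T) x :
  (if x is y :: _ then y != a else true) -> push a x = a :: x.
Proof. by case: x => [|y x] //= H; rewrite (negbTE H). Qed.

Lemma pushs_revKV u x : reduced x -> pushs u (pushs (rev u) x) = x.
Proof.
elim: u x => [|a u IH] x Hx //=.
by rewrite rev_cons -cats1 pushs_cat /= IH ?pushK //; apply: push_reduced.
Qed.

Lemma pushs_revK u x : reduced x -> pushs (rev u) (pushs u x) = x.
Proof. by move=> Hx; rewrite -{2}(revK u) pushs_revKV. Qed.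

Lemma pushs_reducedE u x : reduced (u ++ x) -> pushs u x = u ++ x.
Proof.
elim: u => [|a u IH] //= H.
have Hux : reduced (u ++ x) by move: H; case: (u ++ x) => //= b s /andP[].
rewrite IH // push_fresh //; move: H; case: (u ++ x) => //= b s /andP[].
by rewrite /nadj eq_sym.
Qed.

Lemma pushs0 u : reduced u -> pushs u [::] = u.
Proof. by move=> H; rewrite pushs_reducedE cats0. Qed.

Lemma size_push (a : T) x : size (push a x) <= (size x).+1.
Proof. by case: x => [|y x] //=; case: eqP => //= _; apply: leqW. Qed.

Lemma size_pushs u x : size (pushs u x) <= size u + size x.
Proof. by elim: u => [|a u IH] //=; apply: leq_trans (size_push _ _) _. Qed.

Lemma pushs_push (a : T) r w : reduced w -> pushs (push a r) w = push a (pushs r w).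
Proof.
move=> Hw; case: r => [|y r] //=.
by case: (eqVneq y a) => [->|] //=; rewrite pushK //; apply: pushs_reduced.
Qed.

Lemma pushsA u v w : reduced w -> pushs (pushs u v) w = pushs u (pushs v w).
Proof. by move=> Hw; elim: u => //= a u IH; rewrite pushs_push // IH. Qed.

Lemma reduced_rev u : reduced u -> reduced (rev u).
Proof.
rewrite rev_sorted; case: u => //= a u.
by rewrite (@eq_path _ _ (@nadj n)) // => x y; rewrite /nadj eq_sym.
Qed.

Lemma reduced_cat_cons u (a : T) v :
  reduced (u ++ a :: v) = reduced (u ++ [:: a]) && reduced (a :: v).
Proof. by case: u => [|x u] //=; rewrite !cat_path /= andbT andbA. Qed.

End NormalForms.

Section Group.
Variable n : nat.
Local Notation T := 'I_n.
Local Notation WW := (W n).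

Lemma wval_inj : injective (@wval n).
Proof.
case=> u Hu [v Hv] /= E; subst v.
by rewrite (bool_irrelevance Hu Hv).
Qed.

Lemma wval_mul (u v : WW) : wval (mulW u v) = pushs (wval u) (wval v).
Proof.
rewrite /= /reduce -/(pushs (wval u ++ wval v) [::]) pushs_cat.
by rewrite (pushs0 (wvalP v)).
Qed.

Lemma mulWA (u v w : WW) : mulW (mulW u v) w = mulW u (mulW v w).
Proof. by apply: wval_inj; rewrite !wval_mul pushsA // wvalP. Qed.

Lemma mul1W (u : WW) : mulW (oneW n) u = u.
Proof. by apply: wval_inj; rewrite wval_mul. Qed.

Lemma mulW1 (u : WW) : mulW u (oneW n) = u.
Proof. by apply: wval_inj; rewrite wval_mul pushs0 // wvalP. Qed.

Definition invW (u : WW) : WW := MkW (reduced_rev (wvalP u)).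

Lemma mulVW (u : WW) : mulW (invW u) u = oneW n.
Proof.
apply: wval_inj; rewrite wval_mul /= -{2}(pushs0 (wvalP u)).
by rewrite pushs_revK.
Qed.

Lemma sWK (i : T) : mulW (sW i) (sW i) = oneW n.
Proof. by apply: wval_inj; rewrite wval_mul /= eqxx. Qed.

Section Extension.
Variable f : T -> WW.

Definition prodW (s : seq T) := foldr (fun i acc => mulW (f i) acc) (oneW n) s.

Lemma prodW_cat u v : prodW (u ++ v) = mulW (prodW u) (prodW v).
Proof. by elim: u => [|a u IH] /=; rewrite ?mul1W // IH -mulWA. Qed.

Hypothesis f_invol : forall i, mulW (f i) (f i) = oneW n.

Lemma prodW_push a x : prodW (push a x) = mulW (f a) (prodW x).
Proof.
case: x => [|y x] //=; case: eqVneq => [->|] //=.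
by rewrite -mulWA f_invol mul1W.
Qed.

Lemma prodW_pushs u x : prodW (pushs u x) = prodW (u ++ x).
Proof. by elim: u => [|a u IH] //=; rewrite prodW_push IH. Qed.

Lemma extW_hom : is_hom (extW f).
Proof.
move=> u v; rewrite /extW -!/(prodW _) wval_mul prodW_pushs.
exact: prodW_cat.
Qed.

End Extension.

Lemma extW_sW (f : T -> WW) i : extW f (sW i) = f i.
Proof. by rewrite /extW /= mulW1. Qed.

Lemma eq_extW (f g : T -> WW) : f =1 g -> extW f =1 extW g.
Proof. by move=> E w; rewrite /extW; elim: (wval w) => //= a s ->; rewrite E. Qed.

Lemma hom_oneW (phi : WW -> WW) : is_hom phi -> phi (oneW n) = oneW n.
Proof.
move=> Hphi; have E : phi (oneW n) = mulW (phi (oneW n)) (phi (oneW n)).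
  by rewrite -Hphi mulW1.
by rewrite -{2}(mulVW (phi (oneW n))) {3}E -mulWA mulVW mul1W.
Qed.

Lemma prodW_sW (w : WW) : prodW (@sW n) (wval w) = w.
Proof.
apply: wval_inj; rewrite -[RHS](pushs0 (wvalP w)).
by elim: (wval w) => // a s IH; rewrite [LHS]wval_mul IH.
Qed.

Lemma hom_extW (phi : WW -> WW) : is_hom phi -> phi =1 extW (fun i => phi (sW i)).
Proof.
move=> Hphi w; rewrite -{1}(prodW_sW w) /extW.
elim: (wval w) => /= [|a s <-]; [exact: hom_oneW | exact: Hphi].
Qed.

Lemma eq_hom (phi psi : WW -> WW) : is_hom phi -> is_hom psi ->
  (forall i, phi (sW i) = psi (sW i)) -> phi =1 psi.
Proof. by move=> Hphi Hpsi E w; rewrite (hom_extW Hphi) (hom_extW Hpsi); apply: eq_extW. Qed.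

Lemma comp_hom (phi psi : WW -> WW) : is_hom phi -> is_hom psi -> is_hom (phi \o psi).
Proof. by move=> Hphi Hpsi u v /=; rewrite Hpsi Hphi. Qed.

Lemma wval_extW (f : T -> WW) (w : WW) :
  wval (extW f w) = foldr (fun i acc => pushs (wval (f i)) acc) [::] (wval w).
Proof. by rewrite /extW; elim: (wval w) => // a s IH; rewrite [LHS]wval_mul IH. Qed.

End Group.

Section Palindromes.
Variable n : nat.
Local Notation T := 'I_n.
Local Notation reduced := (sorted (@nadj n)).

(* A reduced palindrome has odd length, so it has a middle letter. *)
Lemma reduced_palindrome (t : seq T) : reduced t -> rev t = t -> t != [::] ->
  exists w a, t = w ++ a :: rev w.
Proof.
elim: {t}(size t) {-2}t (leqnn (size t)) => [|m IH] [|x t] //= Hsz Hs Hr _.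
case/lastP: t Hsz Hs Hr => [|m' y] Hsz Hs Hr; first by exists [::], x.
move: Hr; rewrite rev_cons rev_rcons /= => -[Eyx /rcons_inj [Hm]]; subst y.
case: m' Hsz Hs Hm => [|z m'] Hsz Hs Hm; first by move: Hs; rewrite /= /nadj eqxx.
have Hs' : reduced (z :: m').
  by move: Hs; rewrite rcons_path => /andP[/path_sorted].
have [w [a ->]] : exists w a, z :: m' = w ++ a :: rev w.
  by apply: IH => //; move: Hsz; rewrite size_rcons /=; lia.
by exists (x :: w), a; rewrite rcons_cat /= rev_cons.
Qed.

Lemma eq_cat_cons_cases (w1 w2 : seq T) a1 a2 r1 r2 :
  w1 ++ a1 :: r1 = w2 ++ a2 :: r2 ->
  [\/ w1 = w2 /\ a1 = a2, exists v, w2 = w1 ++ a1 :: v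
    | exists v, w1 = w2 ++ a2 :: v].
Proof.
elim: w1 w2 => [|b w1 IH] [|c w2] /=.
- by case=> -> _; apply: Or31.
- by case=> -> _; apply: Or32; exists w2.
- by case=> -> _; apply: Or33; exists w1.
- case=> -> /IH [[-> ->]|[v ->]|[v ->]]; first exact: Or31.
  + by apply: Or32; exists v.
  + by apply: Or33; exists v.
Qed.

Lemma pushs_palindrome_prefix (w : seq T) a (g : seq T) :
  reduced (w ++ a :: rev w) -> reduced g -> ~ (exists r, g = w ++ a :: r) ->
  exists r, pushs (w ++ a :: rev w) g = w ++ a :: r.
Proof.
move=> Ht Hg Hn; rewrite pushs_cat /=.
set h := pushs (rev w) g.
have Hh : reduced h by apply: pushs_reduced.
have Hgh : g = pushs w h by rewrite /h pushs_revKV.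
have Hwa : reduced (w ++ [:: a]) by move: Ht; rewrite reduced_cat_cons => /andP[].
case Eh: h Hh Hgh => [|y h'] Hh Hgh.
- by exists [::]; rewrite push_fresh //= pushs_reducedE // reduced_cat_cons Hwa.
- case: (eqVneq y a) => [Eya|Nya].
  + by case: Hn; exists h'; rewrite Hgh -Eya pushs_reducedE // reduced_cat_cons Eya Hwa -Eya.
  + exists (y :: h'); rewrite push_fresh // pushs_reducedE // reduced_cat_cons Hwa /=.
    by rewrite /nadj eq_sym Nya.
Qed.

(* Conjugating w2 a2 rev(w2), where w2 = w1 a1 v, by w1 a1 rev(w1) cancels
   both occurrences of a1. *)
Lemma size_conj_palindrome_lt (w1 v : seq T) a1 a2 :
  reduced (w1 ++ a1 :: rev w1) ->
  size (pushs (w1 ++ a1 :: rev w1)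
     (pushs ((w1 ++ a1 :: v) ++ a2 :: rev (w1 ++ a1 :: v)) (w1 ++ a1 :: rev w1)))
  < size ((w1 ++ a1 :: v) ++ a2 :: rev (w1 ++ a1 :: v)).
Proof.
move=> Ht; rewrite -{2}(pushs0 Ht).
rewrite rev_cat rev_cons -cats1 !pushs_cat /= !pushs_cat /=.
rewrite !pushs_revK ?pushK; try by repeat apply: pushs_reduced || apply: push_reduced.
set x0 := pushs (rev w1) [::].
have h0 : size x0 <= size w1.
  by have := size_pushs (rev w1) [::]; rewrite size_rev addn0.
have h1 := size_pushs (rev v) x0.
have h2 := size_push a2 (pushs (rev v) x0).
have h3 := size_pushs v (push a2 (pushs (rev v) x0)).
have h4 := size_pushs w1 (pushs v (push a2 (pushs (rev v) x0))).
rewrite size_rev in h1; rewrite !size_cat /= !size_cat !size_rev /=; lia.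
Qed.

End Palindromes.

Section Automorphisms.
Variable n : nat.
Local Notation T := 'I_n.
Local Notation WW := (W n).

Lemma comp_aut (phi psi : WW -> WW) : is_aut phi -> is_aut psi -> is_aut (phi \o psi).
Proof. by case=> Hphi Bphi [Hpsi Bpsi]; split; [apply: comp_hom | apply: bij_comp]. Qed.

Lemma mulW_conj_invol (x y : WW) : mulW x x = oneW n -> mulW y y = oneW n ->
  mulW (mulW x (mulW y x)) (mulW x (mulW y x)) = oneW n.
Proof.
by move=> Hx Hy; rewrite !mulWA -(mulWA x x) Hx mul1W -(mulWA y y) Hy mul1W.
Qed.

Lemma sigma_hom (i j : T) : is_hom (sigma i j).
Proof.
apply: extW_hom => z; case: (z == j); last exact: sWK.
by apply: mulW_conj_invol; apply: sWK.
Qed.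

Lemma sigma_sW (i j z : T) :
  sigma i j (sW z) = if z == j then mulW (sW i) (mulW (sW j) (sW i)) else sW z.
Proof. exact: extW_sW. Qed.

Lemma sigmaK (i j : T) : i != j -> cancel (sigma i j) (sigma i j).
Proof.
move=> Hij w; apply: (@eq_hom _ (sigma i j \o sigma i j) id) => //.
  by apply: comp_hom; apply: sigma_hom.
move=> z /=; rewrite sigma_sW; case: eqP => [->|Hz]; last by rewrite sigma_sW; case: eqP.
by rewrite !sigma_hom !sigma_sW (negbTE Hij) eqxx !mulWA sWK mulW1 -mulWA sWK mul1W.
Qed.

Lemma sigma_aut (i j : T) : i != j -> is_aut (sigma i j).
Proof. by move=> Hij; split; [apply: sigma_hom | exists (sigma i j); apply: sigmaK]. Qed.

Lemma alpha_hom (p : {perm T}) : is_hom (alpha p).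
Proof. by apply: extW_hom => z; apply: sWK. Qed.

Lemma alpha_sW (p : {perm T}) z : alpha p (sW z) = sW (p z).
Proof. exact: extW_sW. Qed.

Lemma alphaM (p q : {perm T}) : alpha p \o alpha q =1 alpha (q * p).
Proof.
apply: eq_hom; [apply: comp_hom; apply: alpha_hom | apply: alpha_hom |].
by move=> z /=; rewrite !alpha_sW permM.
Qed.

Lemma alpha1 : alpha (1 : {perm T}) =1 id.
Proof. by apply: eq_hom => //; [apply: alpha_hom | move=> z; rewrite alpha_sW perm1]. Qed.

Lemma alphaK (p : {perm T}) : cancel (alpha p) (alpha p^-1).
Proof. by move=> w; rewrite -[_ (_ w)]/((_ \o _) w) alphaM mulgV alpha1. Qed.

Lemma alphaKV (p : {perm T}) : cancel (alpha p^-1) (alpha p).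
Proof. by move=> w; rewrite -[_ (_ w)]/((_ \o _) w) alphaM mulVg alpha1. Qed.

Lemma alpha_aut (p : {perm T}) : is_aut (alpha p).
Proof.
by split; [apply: alpha_hom | exists (alpha p^-1); [apply: alphaK | apply: alphaKV]].
Qed.

Lemma alpha_sigma_conj (p : {perm T}) a b :
  alpha p \o sigma a b \o alpha p^-1 =1 sigma (p a) (p b).
Proof.
apply: eq_hom; last move=> z /=.
- by repeat apply: comp_hom; [apply: alpha_hom | apply: sigma_hom | apply: alpha_hom].
- exact: sigma_hom.
rewrite alpha_sW !sigma_sW (can2_eq (permKV p) (permK p)).
by case: eqP => _; rewrite ?alpha_sW ?permKV // !alpha_hom !alpha_sW.
Qed.

End Automorphisms.

Section Generation.
Variables (n : nat) (k l : 'I_n).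
Local Notation T := 'I_n.
Local Notation WW := (W n).

Definition generated (phi : WW -> WW) := exists f, genW (Yset k l) f /\ f =1 phi.

Lemma generated_eq phi psi : generated phi -> phi =1 psi -> generated psi.
Proof. by case=> f [Hf E] E'; exists f; split => // w; rewrite E E'. Qed.

Lemma generated_id : generated id.
Proof. by exists id; split => //; constructor. Qed.

Lemma generated_Y y : Yset k l y -> generated y.
Proof. by move=> Hy; exists (y \o id); split => //; apply: gen_mul => //; apply: gen_id. Qed.

Lemma genW_comp f g : genW (Yset k l) f -> genW (Yset k l) g ->
  exists h, genW (Yset k l) h /\ h =1 f \o g.
Proof.
move=> Hf Hg; elim: Hf => [|y f' Hy _ [h [Hh E]]|y yi f' Hy c1 c2 _ [h [Hh E]]].
- by exists g.
- by exists (y \o h); split; [apply: gen_mul | move=> w /=; rewrite E].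
- by exists (yi \o h); split; [apply: (gen_inv Hy c1 c2) | move=> w /=; rewrite E].
Qed.

Lemma generated_comp phi psi : generated phi -> generated psi -> generated (phi \o psi).
Proof.
case=> f [Hf Ef] [g [Hg Eg]]; have [h [Hh E]] := genW_comp Hf Hg.
by exists h; split => // w; rewrite E /= Eg Ef.
Qed.

Lemma generated_tperm_gap d (i j : T) : j = i + d.+1 :> nat -> generated (alpha (tperm i j)).
Proof.
elim: d i j => [|d IH] i j Ej.
  by apply: generated_Y; right; exists i, j; rewrite Ej addn1.
have Hm : i + d.+1 < n by have := ltn_ord j; lia.
pose m := Ordinal Hm.
have Hmi : m != i by rewrite -val_eqE /=; apply/eqP; lia.
have Hji : j != i by rewrite -val_eqE /=; apply/eqP; lia.
have Hmj : generated (alpha (tperm m j)).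
  by apply: generated_Y; right; exists m, j; split => //=; lia.
have Etp : tperm i j = (tperm m j * (tperm i m * tperm m j))%g.
  by rewrite -{1}(tpermV m j) -conjgE tpermJ tpermL tpermD.
apply: (generated_eq (generated_comp (generated_comp Hmj (IH i m _)) Hmj)) => // w.
by rewrite Etp -alphaM /= -alphaM.
Qed.

Lemma generated_tperm (i j : T) : generated (alpha (tperm i j)).
Proof.
case: (ltngtP i j) => Hij.
- by apply: (generated_tperm_gap (d := j - i - 1)); lia.
- by rewrite tpermC; apply: (generated_tperm_gap (d := i - j - 1)); lia.
- rewrite (val_inj Hij) tperm1.
  by apply: (generated_eq generated_id) => w; rewrite alpha1.
Qed.

Lemma generated_alpha (p : {perm T}) : generated (alpha p).
Proof.
case: (prod_tpermP p) => ts -> _; elim: ts => [|[a b] ts IH].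
  by rewrite big_nil; apply: (generated_eq generated_id) => w; rewrite alpha1.
rewrite big_cons; apply: (generated_eq (generated_comp IH (generated_tperm a b))).
by move=> w; rewrite alphaM.
Qed.

Lemma generated_sigma (x y : T) : k != l -> x != y -> generated (sigma x y).
Proof.
move=> kl xy; pose p1 := tperm k x; pose p2 := tperm (p1 l) y.
have conj (p : {perm T}) a b : generated (sigma a b) -> generated (sigma (p a) (p b)).
  move=> Hab; apply: generated_eq (alpha_sigma_conj p a b).
  exact: generated_comp (generated_comp (generated_alpha p) Hab) (generated_alpha _).
have Hx : x != p1 l by rewrite -{1}(tpermL k x) -/p1 (inj_eq (@perm_inj _ p1)).
have := conj p2 _ _ (conj p1 _ _ (generated_Y (or_introl erefl))).
by rewrite /p2 tpermD ?tpermL // eq_sym.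
Qed.

End Generation.

Section PeakReduction.
Variable n : nat.
Local Notation T := 'I_n.
Local Notation WW := (W n).
Local Notation reduced := (sorted (@nadj n)).

Definition gen_image (phi : WW -> WW) (i : T) := wval (phi (sW i)).

Definition total_length (phi : WW -> WW) := \sum_(i < n) size (gen_image phi i).

Definition starts_with_half (t g : seq T) :=
  exists w a r, t = w ++ a :: rev w /\ g = w ++ a :: r.

Lemma gen_image_inj phi : is_aut phi -> injective (gen_image phi).
Proof. by case=> _ /bij_inj Hinj i j /wval_inj /Hinj /(congr1 (@wval _)) [->]. Qed.

Lemma gen_image_palindrome phi i : is_aut phi ->
  exists w a, gen_image phi i = w ++ a :: rev w.
Proof.
case=> Hhom Hbij; set t := gen_image phi i.
have Ht : reduced t by apply: wvalP.
have Htt : pushs t t = [::].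
  by have := congr1 (@wval _) (Hhom (sW i) (sW i)); rewrite sWK hom_oneW // wval_mul.
apply: reduced_palindrome => //.
  by have := pushs_revK t Ht; rewrite Htt pushs0 // reduced_rev.
apply/eqP => Ht0; have : phi (sW i) = phi (oneW n) by rewrite hom_oneW //; apply: wval_inj.
by move/(bij_inj Hbij)/(congr1 (@wval _)).
Qed.

Lemma ltn_sum_update (F F' : T -> nat) j :
  (forall z, z != j -> F' z = F z) -> F' j < F j ->
  \sum_(i < n) F' i < \sum_(i < n) F i.
Proof.
move=> E Hj; rewrite (bigD1 j) //= [X in _ < X](bigD1 j) //=.
by rewrite (eq_bigr F) ?ltn_add2r // => z /E.
Qed.

Lemma sigma_shortens phi i j w1 a1 v a2 : is_aut phi -> i != j ->
  gen_image phi i = w1 ++ a1 :: rev w1 ->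
  gen_image phi j = (w1 ++ a1 :: v) ++ a2 :: rev (w1 ++ a1 :: v) ->
  total_length (phi \o sigma i j) < total_length phi.
Proof.
move=> [Hhom _] Hij Ei Ej; apply: (ltn_sum_update (j := j)) => [z Hz|].
  by rewrite /gen_image /= sigma_sW (negbTE Hz).
rewrite /gen_image /= sigma_sW eqxx !Hhom !wval_mul -!/(gen_image phi _) Ei Ej.
by apply: size_conj_palindrome_lt; rewrite -Ei; apply: wvalP.
Qed.

Lemma overlap_shortens phi i j g : is_aut phi -> i != j ->
  starts_with_half (gen_image phi i) g -> starts_with_half (gen_image phi j) g ->
  exists i' j', i' != j' /\ total_length (phi \o sigma i' j') < total_length phi.
Proof.
move=> Hphi Hij [w1 [a1 [r1 [Ei ->]]]] [w2 [a2 [r2 [Ej]]]].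
case/eq_cat_cons_cases => [[E1 E2]|[v Ev]|[v Ev]].
- by case/eqP: Hij; apply: (gen_image_inj Hphi); rewrite Ei Ej E1 E2.
- by exists i, j; split => //; apply: (sigma_shortens Hphi Hij Ei); rewrite Ej Ev.
- exists j, i; rewrite eq_sym; split => //.
  by apply: (sigma_shortens Hphi _ Ej); rewrite 1?eq_sym // Ei Ev.
Qed.

Section NoOverlap.
Variable phi : WW -> WW.
Hypothesis phi_aut : is_aut phi.
Hypothesis no_overlap : forall i j g, i != j ->
  starts_with_half (gen_image phi i) g -> starts_with_half (gen_image phi j) g -> False.

Definition image_word (s : seq T) :=
  foldr (fun i acc => pushs (gen_image phi i) acc) [::] s.

Lemma wval_image_word w : wval (phi w) = image_word (wval w).
Proof. by rewrite (hom_extW phi_aut.1) wval_extW. Qed.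

Lemma image_word_reduced s : reduced (image_word s).
Proof. by elim: s => //= z s IH; apply: pushs_reduced. Qed.

Lemma pushs_gen_image_half x g : reduced g ->
  (forall w a, gen_image phi x = w ++ a :: rev w -> ~ exists r, g = w ++ a :: r) ->
  starts_with_half (gen_image phi x) (pushs (gen_image phi x) g).
Proof.
move=> Hg Hfresh; have [w [a Ew]] := gen_image_palindrome x phi_aut.
have [|r Er] := @pushs_palindrome_prefix _ w a g _ Hg (Hfresh w a Ew).
  by rewrite -Ew; apply: wvalP.
by exists w, a, r; rewrite Ew.
Qed.

Lemma image_word_starts_with_half x s :
  reduced (x :: s) -> starts_with_half (gen_image phi x) (image_word (x :: s)).
Proof.
elim: s x => [|y s IH] x Hs; apply: pushs_gen_image_half.
- by [].
- by move=> w a _ [r]; case: w.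
- exact: (image_word_reduced (y :: s)).
- case/andP: Hs => Hxy Hs w a Ew [r Er]; apply: (no_overlap Hxy _ (IH y Hs)).
  by exists w, a, r.
Qed.

Lemma letter_gen_image c : exists x, gen_image phi x = [:: c].
Proof.
have [g _ gK] := phi_aut.2; have := wval_image_word (g (sW c)); rewrite gK /=.
have := wvalP (g (sW c)); case: (wval (g (sW c))) => [|x s] //= Hs Ec.
have [w [a [r [Ew Er]]]] := image_word_starts_with_half Hs.
(* [:: c] = w ++ a :: r forces w = [::], and then gen_image phi x = [:: a]. *)
move: (etrans Ec Er) => {Er}; case: w Ew => [|b [|? ?]] Ew //= [-> _].
by exists x; rewrite Ew.
Qed.

Lemma no_overlap_alpha : exists p : {perm T}, phi =1 alpha p.
Proof.
pose r c := odflt c [pick x | gen_image phi x == [:: c]].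
have rE c : gen_image phi (r c) = [:: c].
  rewrite /r; case: pickP => [x /eqP //|Hnone].
  by have [x Hx] := letter_gen_image c; move: (Hnone x); rewrite Hx eqxx.
have r_inj : injective r by move=> c1 c2 E; have := rE c1; rewrite E rE => -[].
have [ri riK rKi] := injF_bij r_inj.
exists (perm (can_inj rKi)); apply: eq_hom => [||x]; [exact: phi_aut.1 | exact: alpha_hom |].
by rewrite alpha_sW permE; apply: wval_inj; rewrite -/(gen_image phi x) -{1}(rKi x) rE.
Qed.

End NoOverlap.

End PeakReduction.

Lemma aut_generated n (k l : 'I_n) (phi : W n -> W n) :
  k != l -> is_aut phi -> generated k l phi.
Proof.
move=> kl; have [m] := ubnP (total_length phi); elim: m phi => // m IH phi /ltnSE Hlen Hphi.
have [[i [j [g [Hij [Hi Hj]]]]] | no_overlap] :=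
  classic (exists i j g, i != j /\ starts_with_half (gen_image phi i) g
                                  /\ starts_with_half (gen_image phi j) g).
- have [i' [j' [Hij' Hlt]]] := overlap_shortens Hphi Hij Hi Hj.
  have Hgen := IH _ (leq_trans Hlt Hlen) (comp_aut Hphi (sigma_aut Hij')).
  apply: generated_eq (generated_comp Hgen (generated_sigma kl Hij')) _ => w /=.
  by rewrite sigmaK.
- have [p Ep] : exists p : {perm 'I_n}, phi =1 alpha p.
    by apply: (no_overlap_alpha Hphi) => i j g Hij Hi Hj; apply: no_overlap; exists i, j, g.
  by apply: generated_eq (generated_alpha k l p) _ => w; rewrite Ep.
Qed.

Theorem proposition2p1 (n : nat) (hn : 2 <= n) (k l : 'I_n) (hkl : k != l) :
  (forall y, Yset k l y -> is_aut y) /\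
  (forall phi : W n -> W n, is_aut phi ->
     exists f, genW (Yset k l) f /\ f =1 phi).
Proof.
split; last by move=> phi /(aut_generated hkl).
by move=> y [->|[i [j [_ ->]]]]; [apply: sigma_aut | apply: alpha_aut].
Qed.
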